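(* For $n\in\mathbb{N}$ and $k\in\mathbb{Z}$ with $k<0$, let $a(n,k)$ be the number of $x\in\mathbb{Z}^n$ with $x_j\le1$ for all $j=1,\dots,n$ and $\sum_{j=1}^nx_j=k$. Then \[ a(n,k)\le a(n)\{|k|+\tfrac32 n\}^{n-1},\qquad a(n)=\frac{\sqrt n}{\alpha(n-1)}\frac{2^{n-1}}{(n-1)!}, \] where $\alpha(m)$ is the volume of the unit ball in $\mathbb{R}^m$ and $\alpha(0)=1$. *)

From Stdlib Require Import Reals ZArith List Arith.
Open Scope R_scope.

(* Volume of the unit ball in R^m (closed form; alpha(0) = 1):
   m = 2j     : pi^j / j!
   m = 2j + 1 : 2^(2j+1) j! pi^j / (2j+1)!                              *)
Definition ball_vol (m : nat) : R :=
  let j := Nat.div2 m in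
  if Nat.even m then PI ^ j / INR (fact j)
  else 2 ^ m * INR (fact j) * PI ^ j / INR (fact m).

Definition zsum (x : list Z) : Z := fold_right Z.add 0%Z x.

Definition in_S (n : nat) (k : Z) (x : list Z) : Prop :=
  length x = n /\ Forall (fun t => (t <= 1)%Z) x /\ zsum x = k.

(* l is a duplicate-free enumeration of that set; its length is a(n,k). *)
Definition enumerates_S (n : nat) (k : Z) (l : list (list Z)) : Prop :=
  NoDup l /\ forall x, In x l <-> in_S n k x.

Definition a_const (n : nat) : R :=
  sqrt (INR n) / ball_vol (n - 1) * (2 ^ (n - 1) / INR (fact (n - 1))).

(* Substituting y_j = 1 - x_j turns the points x in Z^n with x_j <= 1 and
   sum x = k into the weak compositions of s = n - k into n parts, whose
   number is the binomial C(s + n - 1, n - 1) = (s+1)(s+2)...(s+n-1)/(n-1)!.                                *)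
From Stdlib Require Import Reals ZArith List Arith Lia Lra.
Open Scope R_scope.

Definition zinterval (a : Z) : list Z :=
  map (fun i => (a + Z.of_nat i)%Z) (seq 0 (Z.to_nat (2 - a))).

Lemma in_zinterval a t : In t (zinterval a) <-> (a <= t <= 1)%Z.
Proof.
  unfold zinterval; rewrite in_map_iff; split.
  - intros [i [<- Hi]]. apply in_seq in Hi. lia.
  - intros H. exists (Z.to_nat (t - a)). split; [lia|]. apply in_seq. lia.
Qed.

Lemma NoDup_zinterval a : NoDup (zinterval a).
Proof.
  apply NoDup_map_NoDup_ForallPairs; [intros x y _ _ H; lia | apply seq_NoDup].
Qed.

Lemma in_S_sum_le n k x : in_S n k x -> (k <= Z.of_nat n)%Z.
Proof.
  revert n k. induction x as [|t x IH]; intros n k [Hl [Hf Hs]]; simpl in *.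
  - subst; lia.
  - subst n. inversion Hf as [|? ? Ht Hx]; subst.
    assert (H := IH (length x) (zsum x) (conj eq_refl (conj Hx eq_refl))). lia.
Qed.

(* Enumeration of the set by its first coordinate t, which must lie in
   [k - (n-1), 1] because the remaining n-1 coordinates sum to at most n-1. *)
Fixpoint enum_S (n : nat) (k : Z) : list (list Z) :=
  match n with
  | O => if Z.eqb k 0 then nil :: nil else nil
  | S m => flat_map (fun t => map (cons t) (enum_S m (k - t)))
             (zinterval (k - Z.of_nat m))
  end.

Lemma in_enum_S n : forall k x, In x (enum_S n k) <-> in_S n k x.
Proof.
  induction n as [|m IH]; intros k x; cbn [enum_S].
  - unfold in_S. destruct (Z.eqb_spec k 0) as [->|Hk]; split.
    + intros [<-|[]]. repeat split; auto.
    + intros [Hl [_ _]]. destruct x; [left; reflexivity | discriminate].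
    + intros [].
    + intros [Hl [_ Hs]]. destruct x; [simpl in Hs; lia | discriminate].
  - rewrite in_flat_map. split.
    + intros [t [Ht Hx]]. apply in_zinterval in Ht. apply in_map_iff in Hx.
      destruct Hx as [x' [<- Hx']]. apply IH in Hx'. destruct Hx' as [Hl [Hf Hs]].
      split; [simpl; auto|]. split; [constructor; auto; lia|]. simpl. lia.
    + intros [Hl [Hf Hs]]. destruct x as [|t x']; [discriminate|].
      simpl in Hl. inversion Hf; subst. simpl in *.
      assert (Hrest : in_S m (t + zsum x' - t)%Z x').
      { split; [lia|]. split; auto. lia. }
      exists t. split.
      * apply in_zinterval. apply in_S_sum_le in Hrest. lia.
      * apply in_map. apply IH. exact Hrest.
Qed.

Lemma NoDup_enum_S n : forall k, NoDup (enum_S n k).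
Proof.
  induction n as [|m IH]; intros k; cbn [enum_S].
  - destruct (Z.eqb k 0); repeat constructor; simpl; tauto.
  - generalize (NoDup_zinterval (k - Z.of_nat m)).
    induction (zinterval (k - Z.of_nat m)) as [|a ts IHts]; intros Hts;
      simpl; [constructor|].
    inversion Hts; subst. apply NoDup_app; auto.
    + apply NoDup_map_NoDup_ForallPairs; [|apply IH].
      intros x y _ _ H; inversion H; auto.
    + intros x Hx Hx'. apply in_map_iff in Hx. destruct Hx as [x' [<- _]].
      apply in_flat_map in Hx'. destruct Hx' as [b [Hb Hbx]].
      apply in_map_iff in Hbx. destruct Hbx as [y [Hy _]]. inversion Hy; subst.
      contradiction.
Qed.

Lemma enumerates_enum_S n k : enumerates_S n k (enum_S n k).
Proof. split; [apply NoDup_enum_S | intros x; apply in_enum_S]. Qed.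

Lemma enumerates_S_length n k l l' :
  enumerates_S n k l -> enumerates_S n k l' -> length l = length l'.
Proof.
  intros [Hnd Hl] [Hnd' Hl'].
  apply Nat.le_antisymm; apply NoDup_incl_length; auto;
    intros x Hx; [apply Hl', Hl | apply Hl, Hl']; exact Hx.
Qed.

(* Number of weak compositions of s into n parts (the last part is s - i). *)
Fixpoint compositions (n s : nat) : nat :=
  match n with
  | O => if Nat.eqb s 0 then 1%nat else 0%nat
  | S m => list_sum (map (compositions m) (seq 0 (S s)))
  end.

Lemma length_enum_S n : forall k, (k <= Z.of_nat n)%Z ->
  length (enum_S n k) = compositions n (Z.to_nat (Z.of_nat n - k)).
Proof.
  induction n as [|m IH]; intros k Hk; cbn [enum_S compositions].
  - destruct (Z.eqb_spec k 0) as [->|Hk0]; [reflexivity|].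
    destruct (Nat.eqb_spec (Z.to_nat (Z.of_nat 0 - k)) 0); simpl; lia.
  - rewrite length_flat_map. unfold zinterval. rewrite map_map.
    rewrite (map_ext_in _ (compositions m)).
    2:{ intros i Hi. apply in_seq in Hi. rewrite length_map, IH by lia.
        f_equal; lia. }
    replace (Z.to_nat (2 - (k - Z.of_nat m))) with (S (Z.to_nat (Z.of_nat (S m) - k)))
      by lia.
    reflexivity.
Qed.

Fixpoint rising (N s : nat) : nat :=
  match N with O => 1%nat | S M => (rising M s * (s + S M))%nat end.

Lemma rising_S_shift N : forall s, rising (S N) s = (S s * rising N (S s))%nat.
Proof.
  induction N as [|N IH]; intros s; [simpl; lia|].
  change (rising (S (S N)) s) with (rising (S N) s * (s + S (S N)))%nat.
  rewrite IH. simpl rising. ring.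
Qed.

(* Pascal-type recurrences: split off the compositions whose first part is
   the largest possible value. *)
Lemma compositions_S_0 m : compositions (S m) 0 = compositions m 0.
Proof. cbn [compositions seq map]. apply Nat.add_0_r. Qed.

Lemma compositions_S_S m s :
  compositions (S m) (S s) = (compositions (S m) s + compositions m (S s))%nat.
Proof.
  change (list_sum (map (compositions m) (seq 0 (S (S s))))
          = (list_sum (map (compositions m) (seq 0 (S s))) + compositions m (S s))%nat).
  rewrite (seq_S (S s)), map_app, list_sum_app. cbn [map]. simpl list_sum. lia.
Qed.

Lemma compositions_rising N : forall s,
  (compositions (S N) s * fact N)%nat = rising N s.
Proof.
  induction N as [|N IH]; intros s.
  - cbn [fact rising]. rewrite Nat.mul_1_r.
    induction s as [|s IHs]; [reflexivity|].
    rewrite compositions_S_S, IHs. reflexivity.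
  - induction s as [|s IHs].
    + rewrite compositions_S_0, fact_simpl. cbn [rising]. rewrite <- IH. ring.
    + rewrite compositions_S_S, Nat.mul_add_distr_r, IHs, fact_simpl,
        (rising_S_shift N s).
      cbn [rising]. rewrite <- IH. ring.
Qed.

(* AM-GM for the rising product: pairing the outer factors s+1 and s+N+2,
   whose mean is the common base, reduces N+2 factors to N factors. *)
Lemma rising_le_pow N s : INR (rising N s) <= (INR s + (INR N + 1) / 2) ^ N.
Proof.
  revert s.
  enough (H : forall N, (forall s, INR (rising N s) <= (INR s + (INR N + 1) / 2) ^ N)
           /\ (forall s, INR (rising (S N) s) <= (INR s + (INR (S N) + 1) / 2) ^ S N))
    by exact (proj1 (H N)).
  clear N. intros N.
  induction N as [|N [IH IH2]]; split; intros s.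
  - simpl. lra.
  - cbn [rising]. rewrite Nat.mul_1_l, plus_INR. simpl. lra.
  - apply IH2.
  - rewrite rising_S_shift. cbn [rising]. rewrite !mult_INR, plus_INR, !S_INR.
    specialize (IH (S s)). rewrite S_INR in IH.
    set (Y := INR s + (INR N + 1 + 1 + 1) / 2).
    replace (INR s + 1 + (INR N + 1) / 2) with Y in IH by (unfold Y; lra).
    assert (Hs : 0 <= INR s) by apply pos_INR.
    assert (HN : 0 <= INR N) by apply pos_INR.
    assert (HP : 0 <= INR (rising N (S s))) by apply pos_INR.
    assert (HYN : 0 <= Y ^ N) by (apply pow_le; unfold Y; lra).
    assert (Hpair : (INR s + 1) * (INR s + 1 + (INR N + 1)) <= Y * Y)
      by (unfold Y; nra).
    change (Y ^ S (S N)) with (Y * (Y * Y ^ N)).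
    assert (Hpos : 0 <= (INR s + 1) * (INR s + 1 + (INR N + 1))) by nra.
    apply Rle_trans with ((INR s + 1) * (INR s + 1 + (INR N + 1)) * Y ^ N).
    + replace ((INR s + 1) * (INR (rising N (S s)) * (INR s + 1 + (INR N + 1))))
        with ((INR s + 1) * (INR s + 1 + (INR N + 1)) * INR (rising N (S s)))
        by ring.
      apply Rmult_le_compat_l; assumption.
    + rewrite <- Rmult_assoc. apply Rmult_le_compat_r; assumption.
Qed.

(* j! pi^j <= (2j+1)!, using pi <= 4 <= (2j+3)(2j+2)/(j+1). *)
Lemma fact_pow_PI_le j : INR (fact j) * PI ^ j <= INR (fact (2 * j + 1)).
Proof.
  induction j as [|j IH]; [simpl; lra|].
  replace (2 * S j + 1)%nat with (S (S (2 * j + 1))) by lia.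
  rewrite !fact_simpl, !mult_INR, !S_INR, plus_INR, mult_INR. simpl pow.
  simpl (INR 2). change (INR 1) with 1.
  assert (Hp := PI_RGT_0). assert (H4 : PI <= 4) by apply PI_4.
  assert (Hj : 0 <= INR j) by apply pos_INR.
  assert (Hf : 0 < INR (fact j)) by apply INR_fact_lt_0.
  assert (Hpj : 0 < PI ^ j) by (apply pow_lt; lra).
  set (F := INR (fact (2 * j + 1))) in *.
  assert (HF : 0 < F) by apply INR_fact_lt_0.
  replace ((INR j + 1) * INR (fact j) * (PI * PI ^ j))
    with ((INR j + 1) * PI * (INR (fact j) * PI ^ j)) by ring.
  apply Rle_trans with ((INR j + 1) * PI * F).
  { apply Rmult_le_compat_l; [nra | exact IH]. }
  assert (Hq : (INR j + 1) * PI
               <= ((1 + 1) * INR j + 1 + 1 + 1) * ((1 + 1) * INR j + 1 + 1)) by nra.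
  rewrite <- Rmult_assoc. apply Rmult_le_compat_r; lra.
Qed.

(* The unit ball of R^N lies in the cube [-1,1]^N: 0 < alpha(N) <= 2^N. *)
Lemma ball_vol_bounds N : 0 < ball_vol N <= 2 ^ N.
Proof.
  assert (Hp := PI_RGT_0). assert (H4 : PI <= 4) by apply PI_4.
  destruct (Nat.Even_or_Odd N) as [[j ->]|[j ->]]; unfold ball_vol.
  - rewrite Nat.even_even, Nat.div2_double, pow_mult.
    replace (2 ^ 2) with 4 by ring.
    assert (Hf : 1 <= INR (fact j)) by (apply (le_INR 1), lt_O_fact).
    assert (Hpj : 0 < PI ^ j) by (apply pow_lt; lra).
    assert (Hpj4 : PI ^ j <= 4 ^ j) by (apply pow_incr; lra).
    split; [apply Rdiv_lt_0_compat; lra|].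
    apply Rle_trans with (PI ^ j); [|lra].
    apply Rmult_le_reg_r with (INR (fact j)); [lra|].
    unfold Rdiv. rewrite Rmult_assoc, Rinv_l by lra. nra.
  - rewrite Nat.even_odd, Nat.div2_odd'.
    assert (H := fact_pow_PI_le j).
    assert (Hf : 0 < INR (fact j)) by apply INR_fact_lt_0.
    assert (Hf2 : 0 < INR (fact (2 * j + 1))) by apply INR_fact_lt_0.
    assert (Hpj : 0 < PI ^ j) by (apply pow_lt; lra).
    assert (H2 : 0 < 2 ^ (2 * j + 1)) by (apply pow_lt; lra).
    split.
    + apply Rdiv_lt_0_compat; [|lra]. apply Rmult_lt_0_compat; [|lra]. nra.
    + apply Rmult_le_reg_r with (INR (fact (2 * j + 1))); [lra|].
      unfold Rdiv. rewrite Rmult_assoc, Rinv_l by lra. nra.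
Qed.

(* a(N+1) >= 1/N!, since sqrt(N+1) >= 1 and alpha(N) <= 2^N. *)
Lemma a_const_ge N : / INR (fact N) <= a_const (S N).
Proof.
  unfold a_const. replace (S N - 1)%nat with N by lia.
  destruct (ball_vol_bounds N) as [Hb Hb2].
  assert (Hf : 0 < / INR (fact N)) by (apply Rinv_0_lt_compat, INR_fact_lt_0).
  assert (Hsq : 1 <= sqrt (INR (S N))).
  { rewrite <- sqrt_1. apply sqrt_le_1_alt. rewrite S_INR.
    assert (0 <= INR N) by apply pos_INR. lra. }
  assert (Hgeom : 1 <= sqrt (INR (S N)) / ball_vol N * 2 ^ N).
  { apply Rmult_le_reg_l with (ball_vol N); [lra|].
    unfold Rdiv. replace (ball_vol N * (sqrt (INR (S N)) * / ball_vol N * 2 ^ N))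
      with (sqrt (INR (S N)) * 2 ^ N) by (field; lra).
    assert (0 < 2 ^ N) by (apply pow_lt; lra). nra. }
  unfold Rdiv at 2. rewrite <- Rmult_assoc. nra.
Qed.

Lemma base_eq N k : (k < 0)%Z ->
  INR (Z.to_nat (Z.of_nat (S N) - k)) + (INR N + 1) / 2
  = IZR (Z.abs k) + 3 / 2 * INR (S N).
Proof.
  intros Hk.
  rewrite INR_IZR_INZ, Z2Nat.id by lia.
  rewrite Z.abs_neq, opp_IZR, minus_IZR, <- INR_IZR_INZ, S_INR by lia. lra.
Qed.

Theorem lemma5p1 (n : nat) (k : Z) (hn : (1 <= n)%nat) (hk : (k < 0)%Z) :
  (exists l, enumerates_S n k l) /\
  (forall l, enumerates_S n k l ->
     INR (length l) <= a_const n * (IZR (Z.abs k) + 3 / 2 * INR n) ^ (n - 1)).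
Proof.
  split; [exists (enum_S n k); apply enumerates_enum_S|].
  intros l Hl. destruct n as [|N]; [lia|].
  replace (S N - 1)%nat with N by lia.
  rewrite (enumerates_S_length _ _ _ _ Hl (enumerates_enum_S (S N) k)),
    length_enum_S by lia.
  set (s := Z.to_nat (Z.of_nat (S N) - k)).
  rewrite <- (base_eq N k hk).
  assert (Hcount := rising_le_pow N s).
  rewrite <- compositions_rising, mult_INR in Hcount.
  assert (Hf : 0 < INR (fact N)) by apply INR_fact_lt_0.
  assert (Ha := a_const_ge N).
  apply Rle_trans with (/ INR (fact N) * (INR s + (INR N + 1) / 2) ^ N).
  - apply Rmult_le_reg_l with (INR (fact N)); [lra|].
    rewrite <- Rmult_assoc, Rinv_r, Rmult_1_l by lra. lra.
  - apply Rmult_le_compat_r; [|exact Ha].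
    apply pow_le. fold s. assert (0 <= INR s) by apply pos_INR.
    assert (0 <= INR N) by apply pos_INR. lra.
Qed.
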